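(* In the standing setting of the context, assume $d_1>d_4$ and that every ball $B(x,r)$ is relatively compact in $M$. Let $u(x,y)=\int_0^\infty p(t,x,y)\,dt$ be the Green function of $X$. Then for all $x,y\in M$, $$u(x,y)\asymp\frac{\phi(d(x,y))}{V(d(x,y))}.$$
   Context: Standing setting: $(M,d)$ is a locally compact separable metric space, $\mu$ a positive Radon measure on $M$ with full support, $(\mathcal{E},\mathcal{F})$ a regular Dirichlet form on $L^2(M;\mu)$ (no killing part), and $X$ the associated $\mu$-symmetric Hunt process. $V,\phi$ are increasing functions on $(0,\infty)$, $\phi^{-1}$ the inverse of $\phi$, with constants $c_i,d_i>0$ such that $c_1(R/r)^{d_1}\le V(R)/V(r)\le c_2(R/r)^{d_2}$ and $c_3(R/r)^{d_3}\le\phi(R)/\phi(r)\le c_4(R/r)^{d_4}$ for all $0<r<R<\infty$. $X$ has a symmetric heat kernel $p(t,x,y)$ defined for all $x,y\in M$, $t>0$, with $p(t,x,y)\asymp\frac{1}{V(\phi^{-1}(t))}\wedge\frac{t}{V(d(x,y))\phi(d(x,y))}$ for all $x,y,t$. $f\asymp g$ means $c^{-1}f\le g\le cf$ with $c\ge1$ independent of the variables. *)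

From HB Require Import structures.
From mathcomp Require Import all_boot all_order all_algebra.
From mathcomp Require Import all_classical all_reals all_analysis.
Set Implicit Arguments. Unset Strict Implicit. Unset Printing Implicit Defensive.
Import Order.TTheory GRing.Theory Num.Theory.
Local Open Scope classical_set_scope.
Local Open Scope ring_scope.

Definition is_metric {R : realType} {M : Type} (d : M -> M -> R) : Prop :=
  (forall x y, 0 <= d x y) /\ (forall x y, d x y = 0 <-> x = y) /\
  (forall x y, d x y = d y x) /\ (forall x y z, d x z <= d x y + d y z).

Definition dball {R : realType} {M : Type} (d : M -> M -> R) (x : M) (r : R)
  : set M := [set y | d x y < r].

Definition dconv {R : realType} {M : Type} (d : M -> M -> R)
  (u : nat -> M) (l : M) : Prop := (fun n => d (u n) l) @ \oo --> 0.

(* A is relatively compact in (M,d): every sequence in A has a subsequence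
   converging in M (sequential characterization, valid in metric spaces) *)
Definition d_rel_compact {R : realType} {M : Type} (d : M -> M -> R)
  (A : set M) : Prop :=
  forall u : nat -> M, (forall n, A (u n)) ->
    exists (s : nat -> nat) (l : M), (forall n, (s n < s n.+1)%N) /\
      dconv d (u \o s) l.

Definition d_separable {R : realType} {M : Type} (d : M -> M -> R) : Prop :=
  exists q : nat -> M, forall x (e : R), 0 < e -> exists n, d x (q n) < e.

Definition d_locally_compact {R : realType} {M : Type} (d : M -> M -> R)
  : Prop := forall x, exists r : R, 0 < r /\ d_rel_compact d (dball d x r).

Definition scaling {R : realType} (f : R -> R) (c c' a b : R) : Prop :=
  forall r s : R, 0 < r -> r < s ->
    c * (s / r) `^ a <= f s / f r /\ f s / f r <= c' * (s / r) `^ b.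

Definition green {R : realType} {M : Type} (p : R -> M -> M -> R) (x y : M)
  : \bar R :=
  (\int[@lebesgue_measure R]_(t in `]0%R, +oo[%classic) (p t x y)%:E)%E.

From HB Require Import structures.
From mathcomp Require Import all_boot all_order all_algebra.
From mathcomp Require Import all_classical all_reals all_analysis.
From mathcomp Require Import ring lra measurable_realfun.
Set Implicit Arguments.
Unset Strict Implicit.
Unset Printing Implicit Defensive.

Import Order.TTheory GRing.Theory Num.Theory.
Local Open Scope classical_set_scope.
Local Open Scope ring_scope.

(* Put r = d(x,y) and a = phi r.  Off the diagonal the heat kernel is comparable
   to min (1 / V (phi^-1 t)) (t / (V r * a)).  On [a/2, a] both terms are at
   least 1 / (2 V r), which gives the lower bound a / V r up to constants.  For
   the upper bound, the integral over ]0, a[ is at most a / V r, while on the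
   dyadic block [2^k a, 2^(k+1) a[ the two scaling conditions give
   V (phi^-1 t) >= K (2^(d1/d4))^k V r; that block thus contributes at most a
   constant times (2 / 2^(d1/d4))^k a / V r, a geometric series that converges
   precisely because d4 < d1. *)

Section integral_cst_bounds.
Context d (T : measurableType d) (R : realType) (mu : {measure set T -> \bar R}).
Variables (A : set T) (f : T -> R) (b : R).
Hypotheses (mA : measurable A) (mf : measurable_fun A f).

Lemma integral_le_cst : (forall t, A t -> 0 <= f t <= b) ->
  (\int[mu]_(x in A) (f x)%:E <= b%:E * mu A)%E.
Proof.
move=> fb; rewrite -integral_cst //; apply: ge0_le_integral => //.
- by move=> t /fb /andP[+ _]; rewrite lee_fin.
- exact/measurable_EFinP.
- by move=> t /fb /andP[_ +]; rewrite lee_fin.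
Qed.

Lemma cst_le_integral : 0 <= b -> (forall t, A t -> b <= f t) ->
  (b%:E * mu A <= \int[mu]_(x in A) (f x)%:E)%E.
Proof.
move=> b_ge0 fb; rewrite -integral_cst //; apply: ge0_le_integral => //.
exact/measurable_EFinP.
Qed.

End integral_cst_bounds.

Lemma nneseries_geometric_le (R : realType) (K r : R) : 0 <= K -> 0 < r -> r < 1 ->
  (\sum_(0 <= k <oo) (K * r ^+ k)%:E <= (K / (1 - r))%:E)%E.
Proof.
move=> K0 r0 r1; apply: lime_le.
  by apply: is_cvg_nneseries => n _ _; rewrite lee_fin mulr_ge0 // exprn_ge0 // ltW.
apply: nearW => n; rewrite sumEFin lee_fin.
have r_norm : `|r| < 1 by rewrite ger0_norm // ltW.
by have := geometric_le_lim n K0 r0 r_norm; rewrite seriesEnat.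
Qed.

Section dyadic_blocks.
Variables (R : realType) (a : R).
Hypothesis a_gt0 : 0 < a.

Definition dyadic_block (k : nat) : set R := `[a * 2 ^+ k, a * 2 ^+ k.+1[%classic.

Lemma dyadic_block_gt0 k t : dyadic_block k t -> 0 < t.
Proof.
rewrite /dyadic_block /= in_itv /= => /andP[+ _].
by apply: lt_le_trans; rewrite mulr_gt0 // exprn_gt0.
Qed.

Lemma bigcup_dyadic_block : \bigcup_k dyadic_block k = `[a, +oo[%classic.
Proof.
apply/seteqP; split => t /=.
  move=> [k _]; rewrite /dyadic_block /= !in_itv /= andbT => /andP[+ _].
  by apply: le_trans; rewrite ler_pMr //; apply: exprn_ege1; rewrite ler1n.
rewrite in_itv /= andbT => at_.
have [n tn] : exists n : nat, t < a * 2 ^+ n.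
  exists (Num.truncn (t / a)).+1; rewrite -ltr_pdivrMl // mulrC.
  apply: (lt_le_trans (truncnS_gt _)); rewrite -natrX ler_nat.
  exact/ltnW/ltn_expl.
have t_below : exists n, t < a * 2 ^+ n by exists n.
case: (ex_minnP t_below) => -[|m] tm m_min.
  by move: tm; rewrite expr0 mulr1 ltNge at_.
exists m => //; rewrite /dyadic_block /= in_itv /= tm andbT leNgt.
by apply/negP => /m_min; rewrite ltnn.
Qed.

Lemma trivIset_dyadic_block : trivIset setT dyadic_block.
Proof.
have mono i j : (i <= j)%N -> a * 2 ^+ i <= a * 2 ^+ j.
  by move=> ij; rewrite ler_pM2l // ler_eXn2l // ltr1n.
apply/trivIsetP => i j _ _ ij; apply/seteqP; split => // t /= [].
rewrite /dyadic_block /= !in_itv /= => /andP[ai bi] /andP[aj bj].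
by case: (ltngtP i j) ij => // h _; have := mono _ _ h; lra.
Qed.

Lemma lebesgue_measure_dyadic_block k :
  lebesgue_measure (dyadic_block k) = (a * 2 ^+ k)%:E.
Proof.
have ak : 0 < a * 2 ^+ k by rewrite mulr_gt0 // exprn_gt0.
rewrite /dyadic_block; have -> : a * 2 ^+ k.+1 = 2 * (a * 2 ^+ k) by rewrite exprS; ring.
rewrite lebesgue_measure_itv /= lte_fin ifT; last lra.
by rewrite -EFinD; congr (_%:E); ring.
Qed.

Lemma integral_itv_ge_dyadic_le (f : R -> R) (K r : R) :
  measurable_fun `[a, +oo[%classic f -> (forall t, a <= t -> 0 <= f t) ->
  0 <= K -> 0 < r -> r < 1 ->
  (forall k, (\int[lebesgue_measure]_(t in dyadic_block k) (f t)%:E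
                <= (K * r ^+ k)%:E)%E) ->
  (\int[lebesgue_measure]_(t in `[a, +oo[%classic) (f t)%:E <= (K / (1 - r))%:E)%E.
Proof.
move=> mf f_ge0 K_ge0 r_gt0 r_lt1 f_block.
have f_ge0' t : `[a, +oo[%classic t -> (0 <= (f t)%:E)%E.
  by rewrite /= in_itv /= andbT lee_fin => /f_ge0.
rewrite -bigcup_dyadic_block ge0_integral_bigcup //; first last.
- exact: trivIset_dyadic_block.
- by rewrite bigcup_dyadic_block.
- by rewrite bigcup_dyadic_block; exact/measurable_EFinP.
- by move=> k; exact: measurable_itv.
apply: le_trans (nneseries_geometric_le K_ge0 r_gt0 r_lt1).
apply: lee_nneseries => // k _ _; apply: integral_ge0 => t bt.
by apply: f_ge0'; rewrite -bigcup_dyadic_block; exists k.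
Qed.

End dyadic_blocks.

Lemma lt1r_powR (R : realType) (a b : R) : 1 < a -> 1 < b -> a < a `^ b.
Proof.
move=> a_gt1 b_gt1; have a_gt0 : 0 < a by lra.
have ln_gt0a : 0 < ln a by exact: ln_gt0.
by rewrite -ltr_ln ?posrE ?powR_gt0 // ln_powR -ltr_pdivrMr // divff ?gt_eqF.
Qed.

(* The [min] with 1 covers [s = r], about which the scaling conditions say nothing. *)
Lemma scaling_ge_powR_ratio (R : realType) (V phi : R -> R)
    (c1 c2 c3 c4 d1 d2 d3 d4 r s : R) :
  0 < c1 -> 0 < c4 -> 0 < d1 -> 0 < d4 ->
  scaling V c1 c2 d1 d2 -> scaling phi c3 c4 d3 d4 ->
  0 < r -> r <= s -> 0 < V r -> 0 < phi r -> 0 <= phi s ->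
  Num.min 1 (c1 * c4^-1 `^ (d1 / d4)) * (phi s / phi r) `^ (d1 / d4) * V r <= V s.
Proof.
move=> c1_gt0 c4_gt0 d1_gt0 d4_gt0 sV sphi r_gt0 rs Vr_gt0 phir_gt0 phis_ge0.
set b := d1 / d4.
have [<-|r_lt_s] := eqVneq r s.
  rewrite divff ?gt_eqF // powR1 mulr1.
  by apply: ler_piMl; [exact: ltW | rewrite ge_min lexx].
have {}r_lt_s : r < s by rewrite lt_neqAle r_lt_s.
have sr_ge0 : 0 <= s / r by rewrite divr_ge0 // ltW // (lt_le_trans r_gt0).
have [V_ratio _] := sV r s r_gt0 r_lt_s.
have [_ phi_ratio] := sphi r s r_gt0 r_lt_s.
have c4V_ge0 : 0 <= c4^-1 by rewrite invr_ge0 ltW.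
have phi_sr_ge0 : 0 <= phi s / phi r by rewrite divr_ge0 // ltW.
have phi_pow : c4^-1 `^ b * (phi s / phi r) `^ b <= (s / r) `^ d1.
  have -> : (s / r) `^ d1 = ((s / r) `^ d4) `^ b.
    by rewrite -powRrM /b mulrCA divff ?gt_eqF // mulr1.
  rewrite -powRM //; apply: ge0_ler_powR.
  - by rewrite /b divr_ge0 // ltW.
  - by rewrite nnegrE mulr_ge0.
  - by rewrite nnegrE powR_ge0.
  - by rewrite mulrC ler_pdivrMr // [_ * c4]mulrC.
rewrite -ler_pdivlMr //; apply: le_trans V_ratio.
rewrite (@le_trans _ _ (c1 * c4^-1 `^ b * (phi s / phi r) `^ b)) //.
  by rewrite ler_wpM2r ?powR_ge0 // ge_min lexx orbT.
by rewrite -mulrA ler_pM2l.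
Qed.

Section increasing_function.
Variables (R : realType) (phi phi_inv : R -> R).
Hypothesis phi_incr : forall r s, 0 < r -> r < s -> 0 < phi r /\ phi r < phi s.
Hypothesis phi_invK : forall t, 0 < t ->
  0 < phi_inv t /\ phi (phi_inv t) = t /\ phi_inv (phi t) = t.

Lemma phi_gt0 r : 0 < r -> 0 < phi r.
Proof.
by move=> r_gt0; have [] := phi_incr r_gt0 (_ : r < r + 1); rewrite ?ltrDl.
Qed.

Lemma phi_inv_le t s : 0 < t -> 0 < s -> t <= phi s -> phi_inv t <= s.
Proof.
move=> t_gt0 s_gt0 ts; rewrite leNgt; apply/negP => /(phi_incr s_gt0) [_].
by have [_ [-> _]] := phi_invK t_gt0; rewrite ltNge ts.
Qed.

Lemma le_phi_inv t s : 0 < t -> 0 < s -> phi s <= t -> s <= phi_inv t.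
Proof.
move=> t_gt0 s_gt0 st; have [inv_gt0 [phiK _]] := phi_invK t_gt0.
rewrite leNgt; apply/negP => /(phi_incr inv_gt0) [_].
by rewrite phiK ltNge st.
Qed.

End increasing_function.

Section green_integral_bounds.
Variables (R : realType) (V phi phi_inv : R -> R) (c1 c2 c3 c4 d1 d2 d3 d4 : R).
Hypothesis V_incr : forall r s, 0 < r -> r <= s -> 0 < V r /\ V r <= V s.
Hypothesis phi_incr : forall r s, 0 < r -> r < s -> 0 < phi r /\ phi r < phi s.
Hypothesis phi_invK : forall t, 0 < t ->
  0 < phi_inv t /\ phi (phi_inv t) = t /\ phi_inv (phi t) = t.
Hypotheses (c1_gt0 : 0 < c1) (c4_gt0 : 0 < c4) (d4_gt0 : 0 < d4) (d4_lt_d1 : d4 < d1).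
Hypotheses (sV : scaling V c1 c2 d1 d2) (sphi : scaling phi c3 c4 d3 d4).

Definition volume_growth_const : R := Num.min 1 (c1 * c4^-1 `^ (d1 / d4)).

Definition dyadic_ratio : R := 2 / 2 `^ (d1 / d4).

Definition green_upper_const (c : R) : R :=
  c + c / (volume_growth_const * (1 - dyadic_ratio)).

Lemma volume_growth_const_gt0 : 0 < volume_growth_const.
Proof. by rewrite lt_min ltr01 mulr_gt0 // powR_gt0 // invr_gt0. Qed.

Lemma dyadic_ratio_gt0 : 0 < dyadic_ratio.
Proof. by rewrite divr_gt0 // powR_gt0. Qed.

Lemma dyadic_ratio_lt1 : dyadic_ratio < 1.
Proof.
rewrite ltr_pdivrMr ?powR_gt0 // mul1r lt1r_powR ?ltr1n //.
by rewrite ltr_pdivlMr // mul1r.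
Qed.

Lemma green_upper_const_ge0 c : 0 <= c -> 0 <= green_upper_const c.
Proof.
move=> c_ge0; have K_gt0 := volume_growth_const_gt0; have rho_lt1 := dyadic_ratio_lt1.
by rewrite addr_ge0 // divr_ge0 // mulr_ge0 ?subr_ge0 //; exact: ltW.
Qed.

Variables (g : R -> R) (c r : R).
Hypotheses (mg : measurable_fun setT g) (g_ge0 : forall t, 0 < t -> 0 <= g t).
Hypotheses (c_gt0 : 0 < c) (r_gt0 : 0 < r).

Definition heat_profile (t : R) : R := Num.min (1 / V (phi_inv t)) (t / (V r * phi r)).

Hypothesis g_lower : forall t, 0 < t -> c^-1 * heat_profile t <= g t.
Hypothesis g_upper : forall t, 0 < t -> g t <= c * heat_profile t.

Let phir_gt0 : 0 < phi r := phi_gt0 phi_incr r_gt0.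
Let Vr_gt0 : 0 < V r. Proof. by have [] := V_incr r_gt0 (lexx r). Qed.

(* The unused [measurable A] pins [A] to the Lebesgue sigma-algebra on [R]. *)
Let measurable_g (A : set R) : measurable A -> measurable_fun A g.
Proof. by move=> _; exact: measurable_funS measurableT (subsetT A) mg. Qed.

Let measurable_gE (A : set R) : measurable A -> measurable_fun A (fun t => (g t)%:E).
Proof. by move=> mA; apply/measurable_EFinP; exact: measurable_g. Qed.

Let g_itv_ge0 t : `]0, +oo[%classic t -> (0 <= (g t)%:E)%E.
Proof. by rewrite /= in_itv /= andbT lee_fin => /g_ge0. Qed.

Lemma heat_profile_ge t : phi r / 2 <= t <= phi r -> (2 * V r)^-1 <= heat_profile t.
Proof.
move=> /andP[t_ge t_le]; have t_gt0 : 0 < t by have := phir_gt0; lra.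
have [inv_gt0 _] := phi_invK t_gt0.
have [Vinv_gt0 Vinv_le] := V_incr inv_gt0 (phi_inv_le phi_incr phi_invK t_gt0 r_gt0 t_le).
rewrite le_min; apply/andP; split.
  by rewrite div1r lef_pV2 ?posrE ?mulr_gt0 //; lra.
rewrite ler_pdivlMr ?mulr_gt0 //.
suff -> : (2 * V r)^-1 * (V r * phi r) = phi r / 2 by [].
by field; rewrite gt_eqF.
Qed.

Lemma green_lower : (((4 * c)^-1 * (phi r / V r))%:E <=
  \int[lebesgue_measure]_(t in `]0%R, +oo[%classic) (g t)%:E)%E.
Proof.
have a_gt0 := phir_gt0; have V_gt0 := Vr_gt0.
have mA : measurable (`[phi r / 2, phi r]%classic : set R) by [].
have mB : measurable (`]0%R, +oo[%classic : set R) by [].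
have sub : `[phi r / 2, phi r]%classic `<=` `]0, +oo[%classic.
  by move=> t /=; rewrite !in_itv /= andbT => /andP[t_ge _]; lra.
apply: le_trans
  (ge0_subset_integral (@lebesgue_measure R) mA mB (measurable_gE mB) g_itv_ge0 sub).
apply: le_trans (cst_le_integral (@lebesgue_measure R) (b := c^-1 * (2 * V r)^-1)
  mA (measurable_g mA) _ _).
- rewrite /= lebesgue_measure_itv /= lte_fin ifT; last lra.
  rewrite -EFinD -EFinM lee_fin [leRHS](_ : _ = (4 * c)^-1 * (phi r / V r)) //.
  by field; rewrite !gt_eqF.
- by rewrite mulr_ge0 // invr_ge0 ltW // mulr_gt0.
- move=> t /=; rewrite in_itv /= => t_itv; have t_gt0 : 0 < t by lra.
  apply: le_trans (g_lower t_gt0); rewrite ler_pM2l ?invr_gt0 //.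
  exact: heat_profile_ge.
Qed.

Lemma integral_below_phi_le :
  (\int[lebesgue_measure]_(t in `]0%R, phi r[%classic) (g t)%:E
     <= (c * (phi r / V r))%:E)%E.
Proof.
have a_gt0 := phir_gt0; have V_gt0 := Vr_gt0.
have mA : measurable (`]0%R, phi r[%classic : set R) by [].
apply: le_trans
  (integral_le_cst (@lebesgue_measure R) (b := c / V r) mA (measurable_g mA) _) _.
  move=> t /=; rewrite in_itv /= => /andP[t_gt0 t_lt]; rewrite g_ge0 //=.
  apply: le_trans (g_upper t_gt0) _; rewrite ler_pM2l //.
  rewrite /heat_profile ge_min; apply/orP; right.
  rewrite ler_pdivrMr ?mulr_gt0 // [leRHS](_ : _ = phi r) ?ltW //.
  by field; rewrite gt_eqF.
rewrite /= lebesgue_measure_itv /= lte_fin a_gt0 -EFinD -EFinM lee_fin subr0.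
by rewrite mulrAC mulrA.
Qed.

Lemma volume_phi_inv_ge k t : phi r * 2 ^+ k <= t ->
  volume_growth_const * (2 `^ (d1 / d4)) ^+ k * V r <= V (phi_inv t).
Proof.
move=> t_ge; have ak_gt0 : 0 < phi r * 2 ^+ k by rewrite mulr_gt0 ?exprn_gt0.
have t_gt0 := lt_le_trans ak_gt0 t_ge.
have [s_gt0 [phi_s _]] := phi_invK ak_gt0.
set s := phi_inv (phi r * 2 ^+ k) in s_gt0 phi_s.
have r_le_s : r <= s.
  apply: (le_phi_inv phi_incr phi_invK ak_gt0 r_gt0).
  by rewrite ler_pMr ?phir_gt0 //; apply: exprn_ege1; rewrite ler1n.
have s_le : s <= phi_inv t.
  by apply: (le_phi_inv phi_incr phi_invK t_gt0 s_gt0); rewrite phi_s.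
have [_ Vs_le] := V_incr s_gt0 s_le.
apply: le_trans Vs_le.
have := scaling_ge_powR_ratio c1_gt0 c4_gt0 (lt_trans d4_gt0 d4_lt_d1) d4_gt0 sV sphi
  r_gt0 r_le_s Vr_gt0 phir_gt0 (ltW (phi_gt0 phi_incr s_gt0)).
have -> : phi s / phi r = 2 ^+ k.
  by rewrite phi_s mulrAC divff ?gt_eqF // mul1r.
by rewrite -powR_mulrn // powRAC powR_mulrn // powR_ge0.
Qed.

Lemma integral_dyadic_block_le k :
  (\int[lebesgue_measure]_(t in dyadic_block (phi r) k) (g t)%:E <=
   (c * phi r / (volume_growth_const * V r) * dyadic_ratio ^+ k)%:E)%E.
Proof.
have K_gt0 := volume_growth_const_gt0; have V_gt0 := Vr_gt0.
have mB : measurable (dyadic_block (phi r) k) by exact: measurable_itv.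
set bound := c / (volume_growth_const * (2 `^ (d1 / d4)) ^+ k * V r).
apply: le_trans (integral_le_cst (@lebesgue_measure R) (b := bound) mB (measurable_g mB) _) _.
  move=> t t_in; have t_gt0 := dyadic_block_gt0 phir_gt0 t_in.
  rewrite g_ge0 //=; apply: le_trans (g_upper t_gt0) _; rewrite ler_pM2l //.
  rewrite /heat_profile ge_min; apply/orP; left.
  move: t_in; rewrite /dyadic_block /= in_itv /= => /andP[t_ge _].
  rewrite div1r lef_pV2 ?posrE ?mulr_gt0 ?exprn_gt0 ?powR_gt0 //.
    exact: volume_phi_inv_ge.
  by have [] := phi_invK t_gt0; move=> /V_incr/(_ (lexx _)) [].
rewrite /= lebesgue_measure_dyadic_block // -EFinM lee_fin /dyadic_ratio expr_div_n.
rewrite [leRHS](_ : _ = bound * (phi r * 2 ^+ k)) //.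
by rewrite /bound; field; rewrite !gt_eqF ?exprn_gt0 ?powR_gt0.
Qed.

Lemma green_upper :
  (\int[lebesgue_measure]_(t in `]0%R, +oo[%classic) (g t)%:E <=
   (green_upper_const c * (phi r / V r))%:E)%E.
Proof.
have a_gt0 := phir_gt0; have V_gt0 := Vr_gt0; have K_gt0 := volume_growth_const_gt0.
have rho_gt0 := dyadic_ratio_gt0; have rho_lt1 := dyadic_ratio_lt1.
have splitE : `]0%R, +oo[%classic = `]0, phi r[%classic `|` `[phi r, +oo[%classic.
  by rewrite -itv_bndbnd_setU // bnd_simp ltW.
have mA : measurable (`]0%R, phi r[%classic : set R) by [].
have mB : measurable (`[phi r, +oo[%classic : set R) by [].
have mAB : measurable (`]0%R, +oo[%classic : set R) by [].
rewrite splitE ge0_integral_setU //; first last.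
- apply/disj_setPS => t [] /=; rewrite !in_itv /= andbT => /andP[_]; lra.
- by rewrite -splitE.
- by rewrite -splitE; exact: measurable_gE.
have tail := integral_itv_ge_dyadic_le a_gt0 (measurable_g mB) _ _ rho_gt0 rho_lt1
  integral_dyadic_block_le.
apply: le_trans (leeD integral_below_phi_le (tail _ _)) _.
- by move=> t t_ge; apply: g_ge0; lra.
- by rewrite divr_ge0 ?mulr_ge0 // ltW.
rewrite -EFinD lee_fin /green_upper_const [leRHS](_ : _ = c * (phi r / V r) +
  c * phi r / (volume_growth_const * V r) / (1 - dyadic_ratio)) //.
by field; rewrite !gt_eqF // subr_gt0.
Qed.

End green_integral_bounds.

Theorem lemma4p6 (R : realType) (dM : measure_display) (M : measurableType dM)
  (d : M -> M -> R) (mu : {measure set M -> \bar R})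
  (p : R -> M -> M -> R) (V phi phi_inv : R -> R)
  (c1 c2 c3 c4 d1 d2 d3 d4 : R) :
  (* metric space, locally compact, separable *)
  is_metric d -> d_locally_compact d -> d_separable d ->
  (* mu: balls are measurable, have finite and positive (full support) measure *)
  (forall x r, measurable (dball d x r)) ->
  (forall x r, 0 < r -> (0 < mu (dball d x r))%E /\ (mu (dball d x r) < +oo)%E) ->
  (* every ball is relatively compact *)
  (forall x r, 0 < r -> d_rel_compact d (dball d x r)) ->
  (* V, phi increasing on (0,oo), positive; phi_inv the inverse of phi *)
  (forall r s, 0 < r -> r <= s -> 0 < V r /\ V r <= V s) ->
  (forall r s, 0 < r -> r < s -> 0 < phi r /\ phi r < phi s) ->
  (forall r, 0 < r -> 0 < phi_inv r /\ phi (phi_inv r) = r /\ phi_inv (phi r) = r) ->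
  0 < c1 -> 0 < c2 -> 0 < c3 -> 0 < c4 ->
  0 < d1 -> 0 < d2 -> 0 < d3 -> 0 < d4 ->
  scaling V c1 c2 d1 d2 -> scaling phi c3 c4 d3 d4 ->
  (* p: symmetric sub-Markovian transition density of X (w.r.t. mu) *)
  (forall x y, measurable_fun setT (fun t => p t x y)) ->
  (forall t x, 0 < t -> measurable_fun setT (p t x)) ->
  (forall t x y, 0 < t -> 0 <= p t x y /\ p t x y = p t y x) ->
  (forall t x, 0 < t -> (\int[mu]_(y in setT) (p t x y)%:E <= 1)%E) ->
  (forall s t x y, 0 < s -> 0 < t ->
     (\int[mu]_(z in setT) (p s x z * p t z y)%:E = (p (s + t) x y)%:E)%E) ->
  (* two-sided heat kernel estimate *)
  (exists c, 1 <= c /\ forall t x y, 0 < t ->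
     let m := if x == y then 1 / V (phi_inv t)
              else Num.min (1 / V (phi_inv t)) (t / (V (d x y) * phi (d x y))) in
     c^-1 * m <= p t x y /\ p t x y <= c * m) ->
  (* extra assumption of the lemma *)
  d4 < d1 ->
  (* Green function estimate *)
  exists C, 1 <= C /\ forall x y, x <> y ->
    (((C^-1 * (phi (d x y) / V (d x y)))%:E <= green p x y) /\
     (green p x y <= (C * (phi (d x y) / V (d x y)))%:E))%E.
Proof.
move=> [d_ge0 [d_eq0 _]] _ _ _ _ _ V_incr phi_incr phi_invK c1_gt0 _ _ c4_gt0 _ _ _
  d4_gt0 sV sphi mp _ p_ge0 _ _ [c [c_ge1 hk]] d4_lt_d1.
have c_gt0 : 0 < c by apply: lt_le_trans c_ge1.
have G_ge0 := green_upper_const_ge0 c1_gt0 c4_gt0 d4_gt0 d4_lt_d1 (ltW c_gt0).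
set G := green_upper_const c1 c4 d1 d4 c in G_ge0.
exists (4 * c + G); split; first lra.
move=> x y xy; set r := d x y.
have r_gt0 : 0 < r.
  by rewrite lt_neqAle d_ge0 andbT eq_sym; apply/eqP => /d_eq0.
have g_ge0 t : 0 < t -> 0 <= p t x y by move=> t_gt0; case: (p_ge0 t x y t_gt0).
have hk_xy t : 0 < t -> c^-1 * heat_profile V phi phi_inv r t <= p t x y /\
                        p t x y <= c * heat_profile V phi phi_inv r t.
  by move=> t_gt0; have := hk t x y t_gt0; rewrite /= (introF eqP xy).
have ratio_ge0 : 0 <= phi r / V r.
  have [Vr_gt0 _] := V_incr r r r_gt0 (lexx r).
  by rewrite divr_ge0 // ltW // (phi_gt0 phi_incr r_gt0).
rewrite /green; split.
- apply: le_trans (green_lower V_incr phi_incr phi_invK (mp x y) g_ge0 c_gt0 r_gt0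
    (fun t t_gt0 => (hk_xy t t_gt0).1)).
  by rewrite lee_fin ler_wpM2r // lef_pV2 ?posrE ?mulr_gt0 //; lra.
- apply: le_trans (green_upper V_incr phi_incr phi_invK c1_gt0 c4_gt0 d4_gt0 d4_lt_d1 sV sphi
    (mp x y) g_ge0 c_gt0 r_gt0 (fun t t_gt0 => (hk_xy t t_gt0).2)) _.
  by rewrite lee_fin ler_wpM2r // -/G; lra.
Qed.
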